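(* Write $\forall^*x\,\phi$ for $\sim\exists x\sim\phi$ and $\phi\to^*\psi$ for $\sim(\phi\wedge\sim\psi)$. Let $\bar x=(x_1,\dots,x_n)$, let $\bar y$ be a tuple of fresh variables, let $\psi(\bar x,\bar y)$ be an $\mathrm{FO}(\perp\!\!\!\perp_c,\sim)$-formula, and set $\phi_\exists:=\exists\bar y(\bar x\perp\!\!\!\perp\bar y\wedge\psi(\bar x,\bar y))$ and $\phi_\forall:=\forall^*\bar y(\bar x\perp\!\!\!\perp\bar y\to^*\psi(\bar x,\bar y))$. Then for every finite structure $\mathcal A$ and every probabilistic team $\mathbb X$ over $\{x_1,\dots,x_n\}$: (i) $\mathcal A\models_{\mathbb X}\phi_\exists$ iff $\mathcal A\models_{\mathbb X(d/\bar y)}\psi$ for some probability distribution $d\colon A^{|\bar y|}\to[0,1]$; (ii) $\mathcal A\models_{\mathbb X}\phi_\forall$ iff $\mathcal A\models_{\mathbb X(d/\bar y)}\psi$ for all probability distributions $d\colon A^{|\bar y|}\to[0,1]$. Here $\mathbb X(d/\bar y)$ is the team $s(\bar a/\bar y)\mapsto\mathbb X(s)\cdot d(\bar a)$ ($s\in X$, $\bar a\in A^{|\bar y|}$).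
   Context: Probabilistic team semantics. Fix a finite relational vocabulary $\tau$ containing $=$; structures $\mathcal A$ are finite $\tau$-structures with universe $A$. An assignment over a finite set $D$ of first-order variables is a map $s\colon D\to A$; $s(a/x)$ maps $x$ to $a$ and agrees with $s$ elsewhere. A probabilistic team over $D$ is a function $\mathbb X\colon X\to[0,1]$ with $\sum_{s\in X}\mathbb X(s)=1$, where $X$ is a finite set of assignments over $D$ (zero weights allowed); $\mathrm{supp}(\mathbb X)=\{s:\mathbb X(s)\neq0\}$. For a tuple $\bar x$ and $\bar a\in A^{|\bar x|}$, $|\mathbb X_{\bar x=\bar a}|=\sum_{s\in X,\,s(\bar x)=\bar a}\mathbb X(s)$. For $F$ mapping each $t\in X$ to a probability distribution $F(t)$ on $A$, $\mathbb X(F/x)(s(a/x))=\sum_{t\in X,\ t(a/x)=s(a/x)}\mathbb X(t)\,F(t)(a)$; for a tuple $\bar y$ one applies this variable by variable; $\mathbb X(A/x)$ is $\mathbb X(F/x)$ with every $F(t)$ uniform on $A$. For $k\in[0,1]$, $\mathbb Y\sqcup_k\mathbb Z$ is $s\mapsto k\mathbb Y(s)+(1-k)\mathbb Z(s)$. Syntax of $\mathrm{FO}(\perp\!\!\!\perp_c,\sim)$: $\phi::=R(\bar x)\mid\neg R(\bar x)\mid \bar y\perp\!\!\!\perp_{\bar x}\bar z\mid\sim\phi\mid\phi\wedge\phi\mid\phi\vee\phi\mid\exists x\phi\mid\forall x\phi$. Semantics: literals hold in $\mathbb X$ iff every $s\in\mathrm{supp}(\mathbb X)$ satisfies them; $\bar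 y\perp\!\!\!\perp_{\bar x}\bar z$ holds iff $|\mathbb X_{\bar x\bar y=s(\bar x\bar y)}|\cdot|\mathbb X_{\bar x\bar z=s(\bar x\bar z)}|=|\mathbb X_{\bar x\bar y\bar z=s(\bar x\bar y\bar z)}|\cdot|\mathbb X_{\bar x=s(\bar x)}|$ for all $s\colon\mathrm{Var}(\bar x\bar y\bar z)\to A$; the marginal independence atom $\bar x\perp\!\!\!\perp\bar y$ is the case of empty conditioning tuple; $\sim\phi$ holds iff $\phi$ does not; $\wedge$ is classical; $\phi\vee\psi$ holds in $\mathbb X$ iff $\phi$ holds in $\mathbb Y$ and $\psi$ in $\mathbb Z$ for some $\mathbb Y,\mathbb Z,k$ with $\mathbb Y\sqcup_k\mathbb Z=\mathbb X$; $\exists x\phi$ holds in $\mathbb X$ iff $\phi$ holds in $\mathbb X(F/x)$ for some $F$; $\forall x\phi$ holds in $\mathbb X$ iff $\phi$ holds in $\mathbb X(A/x)$. *)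

From HB Require Import structures.
From mathcomp Require Import all_boot all_order all_algebra.
From mathcomp Require Import reals.
Set Implicit Arguments.
Unset Strict Implicit.
Unset Printing Implicit Defensive.
Import Order.TTheory GRing.Theory Num.Theory.
Local Open Scope ring_scope.

(* A finite relational vocabulary: a finite type of relation symbols with arities.
   Equality '=' is always present, as built-in atoms Eq / NEq below. *)
Record vocab := Vocab { sym : finType; ar : sym -> nat }.

Definition pinterp (tau : vocab) (A : finType) :=
  forall r : sym tau, {set (ar r).-tuple A}.

Inductive pform (tau : vocab) (V : Type) : Type :=
| Rel  (r : sym tau) (xs : (ar r).-tuple V)
| NRel (r : sym tau) (xs : (ar r).-tuple V)
| Eq   (x y : V)
| NEq  (x y : V)
| CInd (x y z : seq V)                               (* y ⫫_x z   *)
| Neg  of pform tau V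
| And  of pform tau V & pform tau V
| Or   of pform tau V & pform tau V
| Ex   of V & pform tau V
| All  of V & pform tau V.

Arguments Rel {tau V}. Arguments NRel {tau V}. Arguments Eq {tau V}.
Arguments NEq {tau V}. Arguments CInd {tau V}. Arguments Neg {tau V}.
Arguments And {tau V}. Arguments Or {tau V}. Arguments Ex {tau V}.
Arguments All {tau V}.

Section Semantics.
Variables (R : realType) (tau : vocab) (V A : finType) (I : pinterp tau A).

(* An assignment over a domain D ⊆ V: x ↦ Some (s x) for x ∈ D, None outside D. *)
Definition asg := {ffun V -> option A}.

Definition adom (s : asg) : {set V} := [set v | s v != None].

Definition upd (s : asg) (x : V) (a : A) : asg :=
  [ffun v => if v == x then Some a else s v].

Definition upds (s : asg) (ys : seq V) (as_ : seq A) : asg :=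
  foldr (fun p t => upd t p.1 p.2) s (zip ys as_).

(* A probabilistic team: an underlying finite set Xs of assignments together with
   weights X : asg -> R (X is 0 outside Xs), nonnegative and summing to 1. *)
Definition is_team (Xs : {set asg}) (X : asg -> R) : Prop :=
  [/\ forall s, 0 <= X s, forall s, s \notin Xs -> X s = 0
    & \sum_(s in Xs) X s = 1].

Definition team_over (D : {set V}) (Xs : {set asg}) (X : asg -> R) : Prop :=
  is_team Xs X /\ forall s, s \in Xs -> adom s = D.

Definition is_dist (T : finType) (d : T -> R) : Prop :=
  (forall t, 0 <= d t) /\ \sum_(t : T) d t = 1.

(* Underlying set and weights of X(F/x). *)
Definition ext_set (Xs : {set asg}) (x : V) : {set asg} :=
  [set upd t x a | t in Xs, a in [set: A]].

Definition ext_w (Xs : {set asg}) (X : asg -> R) (F : asg -> A -> R) (x : V)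
  (u : asg) : R :=
  match u x with
  | Some a => \sum_(t in Xs | upd t x a == u) X t * F t a
  | None => 0
  end.

Definition pmass (Xs : {set asg}) (X : asg -> R) (us : seq V) (g : {ffun V -> A}) : R :=
  \sum_(t in Xs | [seq t u | u <- us] == [seq Some (g u) | u <- us]) X t.

Definition rel_holds (s : asg) (r : sym tau) (xs : (ar r).-tuple V) : Prop :=
  exists as_ : (ar r).-tuple A, [seq s v | v <- xs] = [seq Some a | a <- as_]
                                /\ as_ \in I r.

Definition nrel_holds (s : asg) (r : sym tau) (xs : (ar r).-tuple V) : Prop :=
  exists as_ : (ar r).-tuple A, [seq s v | v <- xs] = [seq Some a | a <- as_]
                                /\ as_ \notin I r.

Fixpoint psat (phi : pform tau V) (Xs : {set asg}) (X : asg -> R) {struct phi} : Prop :=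
  match phi with
  | Rel r xs => forall s, s \in Xs -> X s != 0 -> rel_holds s xs
  | NRel r xs => forall s, s \in Xs -> X s != 0 -> nrel_holds s xs
  | Eq x y => forall s, s \in Xs -> X s != 0 -> s x != None /\ s x = s y
  | NEq x y => forall s, s \in Xs -> X s != 0 ->
                 [/\ s x != None, s y != None & s x != s y]
  | CInd x y z => forall g : {ffun V -> A},
      pmass Xs X (x ++ y) g * pmass Xs X (x ++ z) g
      = pmass Xs X (x ++ y ++ z) g * pmass Xs X x g
  | Neg p => ~ psat p Xs X
  | And p q => psat p Xs X /\ psat q Xs X
  | Or p q => exists (Y Z : asg -> R) (k : R),
      [/\ 0 <= k <= 1, is_team Xs Y, is_team Xs Z &
          (forall s, s \in Xs -> X s = k * Y s + (1 - k) * Z s)]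
      /\ psat p Xs Y /\ psat q Xs Z
  | Ex x p => exists F : asg -> A -> R,
      (forall t, t \in Xs -> is_dist (F t)) /\ psat p (ext_set Xs x) (ext_w Xs X F x)
  | All x p => psat p (ext_set Xs x) (ext_w Xs X (fun _ _ => (#|A|%:R)^-1) x)
  end.

Definition dext_set (Xs : {set asg}) (ys : seq V) : {set asg} :=
  [set upds s ys (tval as_) | s in Xs, as_ in [set: (size ys).-tuple A]].

Definition dext_w (Xs : {set asg}) (X : asg -> R) (ys : seq V)
  (d : (size ys).-tuple A -> R) (u : asg) : R :=
  \sum_(s in Xs) \sum_(as_ : (size ys).-tuple A | upds s ys as_ == u) X s * d as_.

End Semantics.

Fixpoint fv (tau : vocab) (V : eqType) (phi : pform tau V) : seq V :=
  match phi with
  | Rel _ xs | NRel _ xs => tval xs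
  | Eq x y | NEq x y => [:: x; y]
  | CInd x y z => x ++ y ++ z
  | Neg p => fv p
  | And p q | Or p q => fv p ++ fv q
  | Ex x p | All x p => [seq v <- fv p | v != x]
  end.

Definition exs (tau : vocab) (V : Type) (ys : seq V) (p : pform tau V) :=
  foldr Ex p ys.
Definition forallS (tau : vocab) (V : Type) (ys : seq V) (p : pform tau V) :=
  Neg (exs ys (Neg p)).
Definition implS (tau : vocab) (V : Type) (p q : pform tau V) :=
  Neg (And p (Neg q)).

Definition phi_ex (tau : vocab) (V : Type) (xs ys : seq V) (psi : pform tau V) :=
  exs ys (And (CInd [::] xs ys) psi).
Definition phi_all (tau : vocab) (V : Type) (xs ys : seq V) (psi : pform tau V) :=
  forallS ys (implS (CInd [::] xs ys) psi).

From HB Require Import structures.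
From mathcomp Require Import all_boot all_order all_algebra.
From mathcomp Require Import reals.
From Stdlib Require Import Classical.
Set Implicit Arguments. Unset Strict Implicit. Unset Printing Implicit Defensive.
Import Order.TTheory GRing.Theory Num.Theory.
Local Open Scope ring_scope.

(* The existential block ∃ȳ lets every quantifier choose, for each assignment,
   a distribution of its variable; these choices compose into a single kernel
   K giving every s in X a distribution K s on the value tuples of ȳ, and
   ∃ȳ φ holds in X iff φ holds in the kernel extension X(K/ȳ) for some such K
   ([exs_kernel]; the converse splits a kernel into a marginal for the first
   variable and a conditional kernel for the rest).  When X is a team over
   exactly x̄, the atom x̄ ⫫ ȳ holds in X(K/ȳ) iff K s equals, on the support
   of X, the mixture d = Σ_s X(s) K(s) ([indep_kernel_mix], [indep_const]); then
   X(K/ȳ) is the team X(d/ȳ) of the theorem.  Hence choosing K under the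
   independence constraint is choosing one distribution d ([indep_kernel_iff]),
   which gives (i) directly and (ii) by classical negation. *)

Section Assignments.
Variables (V A : finType).
Local Notation asg := (asg V A).

Lemma upd_comm (s : asg) (x y : V) (a b : A) : x != y ->
  upd (upd s x a) y b = upd (upd s y b) x a.
Proof.
move=> nxy; apply/ffunP => v; rewrite !ffunE.
case: (eqVneq v y) => [->|_] //; case: (eqVneq y x) => // eyx.
by rewrite eyx eqxx in nxy.
Qed.

Lemma upds_out (s : asg) (ys : seq V) (as_ : seq A) (v : V) :
  v \notin ys -> upds s ys as_ v = s v.
Proof.
elim: ys as_ => [|y ys IH] [|a as_] //=; rewrite inE negb_or => /andP[nvy nvys].
by rewrite ffunE (negbTE nvy) IH.
Qed.

Lemma upds_map (s : asg) (ys : seq V) (as_ : seq A) : uniq ys ->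
  size as_ = size ys -> map (upds s ys as_) ys = map Some as_.
Proof.
elim: ys as_ => [|y ys IH] [|a as_] //= /andP[nyys uys] [sz].
rewrite ffunE eqxx -(IH _ uys sz); congr cons.
apply/eq_in_map => v vys; rewrite ffunE.
by case: (eqVneq v y) => // evy; rewrite -evy vys in nyys.
Qed.

Lemma upds_upd (s : asg) (y : V) (ys : seq V) (a : A) (as_ : seq A) :
  y \notin ys -> upds (upd s y a) ys as_ = upd (upds s ys as_) y a.
Proof.
elim: ys as_ => [|z ys IH] [|b as_] //; rewrite inE negb_or => /andP[nyz nys].
have upds_cons t : upds t (z :: ys) (b :: as_) = upd (upds t ys as_) z b by [].
by rewrite !upds_cons IH // upd_comm // eq_sym.
Qed.

Lemma upd_inj (s s' : asg) (y : V) (a a' : A) : s y = None -> s' y = None ->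
  upd s y a = upd s' y a' -> s = s' /\ a = a'.
Proof.
move=> hs hs' e; split.
  apply/ffunP => v; case: (eqVneq v y) => [->|nvy]; first by rewrite hs hs'.
  by have := congr1 (fun f : asg => f v) e; rewrite !ffunE (negbTE nvy).
by have := congr1 (fun f : asg => f y) e; rewrite !ffunE eqxx => -[].
Qed.

Lemma upds_inj (s s' : asg) (ys : seq V) (as_ as' : seq A) : uniq ys ->
  (forall y, y \in ys -> s y = None) -> (forall y, y \in ys -> s' y = None) ->
  size as_ = size ys -> size as' = size ys ->
  upds s ys as_ = upds s' ys as' -> s = s' /\ as_ = as'.
Proof.
move=> uys hs hs' sz sz' e; split.
  apply/ffunP => v; case: (boolP (v \in ys)) => vys; first by rewrite hs // hs'.
  by rewrite -(upds_out s as_ vys) -(upds_out s' as' vys) e.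
by have := upds_map s uys sz; rewrite e upds_map // => /(inj_map (@Some_inj _)).
Qed.

Definition forget (y : V) (u : asg) : asg := [ffun v => if v == y then None else u v].

Lemma forget_upd (t : asg) (y : V) (a : A) : t y = None -> forget y (upd t y a) = t.
Proof. by move=> ht; apply/ffunP => v; rewrite !ffunE; case: (eqVneq v y) => [->|]. Qed.

End Assignments.

Lemma map_nth_index (T : eqType) (U : Type) (u0 : U) (ys : seq T) (bs : seq U) :
  uniq ys -> size bs = size ys -> map (fun v => nth u0 bs (index v ys)) ys = bs.
Proof.
elim: ys bs => [|y ys IH] [|b bs] //= /andP[nyys uys] [sz].
rewrite eqxx -[in RHS](IH bs uys sz); congr cons; apply/eq_in_map => v vys /=.
by case: (eqVneq y v) => [evy|] //; rewrite evy vys in nyys.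
Qed.

Section Tuples.
Variables (R : realType) (A : finType).

Lemma sum_tuple_cons (n : nat) (f : n.+1.-tuple A -> R) :
  \sum_(t : n.+1.-tuple A) f t = \sum_(a : A) \sum_(t : n.-tuple A) f [tuple of a :: t].
Proof.
rewrite pair_bigA (reindex (fun p : A * n.-tuple A => [tuple of p.1 :: p.2])) //=.
exists (fun t => (thead t, behead_tuple t)).
  by move=> [a t] _; rewrite theadE; congr pair; apply: val_inj.
by move=> t _; case/tupleP: t => a t; apply: val_inj.
Qed.

Lemma behead_cons (n : nat) (a : A) (t : n.-tuple A) : behead_tuple [tuple of a :: t] = t.
Proof. exact: val_inj. Qed.

(* There is a single empty tuple, which carries all the mass. *)
Lemma dist_tuple_size0 (n : nat) (d : n.-tuple A -> R) :
  n = 0%N -> is_dist d -> forall t, d t = 1.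
Proof.
move=> n0 [_ d1] t; subst n; rewrite -d1 (big_pred1 t) // => t' /=.
by apply/esym/eqP; rewrite [t']tuple0 [t]tuple0.
Qed.

Lemma sum_cond_prod (S T : finType) (D : {pred S}) (P : pred S) (Q : pred T)
  (f : S -> R) (g : T -> R) :
  \sum_(s in D) \sum_(t : T) (if P s && Q t then f s * g t else 0) =
  (\sum_(s in D) (if P s then f s else 0)) * \sum_(t : T) (if Q t then g t else 0).
Proof.
rewrite big_distrl; apply: eq_bigr => s _; rewrite big_distrr; apply: eq_bigr => t _.
by case: (P s); case: (Q t); rewrite /= ?mul0r ?mulr0.
Qed.

End Tuples.

(* For a constant kernel this is the team
   X(d/ȳ) of the theorem ([dext_w] is literally [kext] of [fun _ => d]). *)
Section Kernels.
Variables (R : realType) (tau : vocab) (V A : finType) (I : pinterp tau A).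
Local Notation asg := (asg V A).

Definition kext (Xs : {set asg}) (X : asg -> R) (ys : seq V)
  (K : asg -> (size ys).-tuple A -> R) (u : asg) : R :=
  \sum_(s in Xs) \sum_(b : (size ys).-tuple A | upds s ys b == u) X s * K s b.

Definition fresh_for (Xs : {set asg}) (ys : seq V) : Prop :=
  forall s, s \in Xs -> forall y, y \in ys -> s y = None.

Lemma psat_ext (p : pform tau V) : forall (Xs : {set asg}) (X Y : asg -> R),
  (forall s, s \in Xs -> X s = Y s) -> psat I p Xs X <-> psat I p Xs Y.
Proof.
elim: p => [r xs|r xs|x y|x y|x y z|p IH|p IHp q IHq|p IHp q IHq|x p IH|x p IH]
  Xs X Y e /=; try by split=> H s sX; [rewrite -e|rewrite e] => //; apply: H.
- have pm us g : pmass Xs X us g = pmass Xs Y us g.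
    by apply: eq_bigr => t /andP[tX _]; exact: e.
  by split=> H g; move: (H g); rewrite !pm.
- by have := IH Xs X Y e; tauto.
- by have := IHp Xs X Y e; have := IHq Xs X Y e; tauto.
- split=> -[Y' [Z [k [[hk tY tZ hd] H]]]]; exists Y', Z, k; split=> //; split=> // s sX.
    by rewrite -e // hd.
  by rewrite e // hd.
- have ew F u : ext_w Xs X F x u = ext_w Xs Y F x u.
    by rewrite /ext_w; case: (u x) => // a; apply: eq_bigr => t /andP[tX _]; rewrite e.
  by split=> -[F [hF H]]; exists F; split=> //; apply/(IH _ _ _ (fun u _ => ew F u)).
- apply: IH => u _; rewrite /ext_w; case: (u x) => // a.
  by apply: eq_bigr => t /andP[tX _]; rewrite e.
Qed.

Lemma kext_upds (Xs : {set asg}) (X : asg -> R) (ys : seq V)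
  (K : asg -> (size ys).-tuple A -> R) (s : asg) (b : (size ys).-tuple A) :
  uniq ys -> fresh_for Xs ys -> s \in Xs -> kext Xs X K (upds s ys b) = X s * K s b.
Proof.
move=> uys hN sX; rewrite /kext (bigD1 s) //= (big_pred1 b); last first.
  move=> c; apply/eqP/eqP => [e|->] //=; apply: val_inj.
  by have [] := upds_inj uys (hN s sX) (hN s sX) (size_tuple c) (size_tuple b) e.
rewrite [X in _ + X]big1 ?addr0 // => s' /andP[s'X ns's]; apply: big1 => c /eqP e.
have [es _] := upds_inj uys (hN s' s'X) (hN s sX) (size_tuple c) (size_tuple b) e.
by rewrite es eqxx in ns's.
Qed.

Lemma kext_eq (Xs : {set asg}) (X : asg -> R) (ys : seq V)
  (K K' : asg -> (size ys).-tuple A -> R) :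
  (forall s b, s \in Xs -> K s b = K' s b) -> forall u, kext Xs X K u = kext Xs X K' u.
Proof.
by move=> e u; apply: eq_bigr => s sX; apply: eq_bigr => b _; rewrite e.
Qed.

Lemma ext_w_upd (Xs : {set asg}) (X : asg -> R) (F : asg -> A -> R) (y : V)
  (s : asg) (a : A) : fresh_for Xs [:: y] -> s \in Xs ->
  ext_w Xs X F y (upd s y a) = X s * F s a.
Proof.
move=> hN sX; rewrite /ext_w ffunE eqxx (big_pred1 s) // => t /=.
apply/andP/eqP => [[tX /eqP e]|->]; last by rewrite sX eqxx.
by have [] := upd_inj (hN t tX y (mem_head _ _)) (hN s sX y (mem_head _ _)) e.
Qed.

Lemma sum_kext (Xs : {set asg}) (X : asg -> R) (ys : seq V)
  (K : asg -> (size ys).-tuple A -> R) (P : pred asg) : uniq ys -> fresh_for Xs ys ->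
  \sum_(t in dext_set Xs ys | P t) kext Xs X K t =
  \sum_(s in Xs) \sum_(b : (size ys).-tuple A)
     (if P (upds s ys b) then X s * K s b else 0).
Proof.
move=> uys hN; rewrite big_mkcondr /dext_set curry_imset2X big_imset /=; last first.
  move=> [s b] [s' b'] /setXP[sX _] /setXP[s'X _] /= e.
  have [-> eb] := upds_inj uys (hN s sX) (hN s' s'X) (size_tuple b) (size_tuple b') e.
  by congr pair; apply: val_inj.
rewrite pair_big; apply: eq_big => [[s b]|[s b]]; first by rewrite !inE andbT.
by case/setXP=> sX _ /=; rewrite kext_upds.
Qed.

Lemma dext_set_nil (Xs : {set asg}) : dext_set Xs [::] = Xs.
Proof.
apply/setP => u; apply/imset2P/idP => [[s [[] // ?] sX _ ->] //|uX].
by apply: (@Imset2spec _ _ _ _ _ _ _ u [tuple]).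
Qed.

Lemma dext_set_cons (Xs : {set asg}) (y : V) (ys : seq V) : y \notin ys ->
  dext_set (ext_set Xs y) ys = dext_set Xs (y :: ys).
Proof.
move=> nyys; apply/setP => u; apply/imset2P/imset2P.
  move=> [v b /imset2P[t a tX _ ->] _ ->].
  by exists t [tuple of a :: b] => //; rewrite upds_upd.
move=> [t c tX _ ->]; case/tupleP: c => a b.
by exists (upd t y a) b; rewrite ?upds_upd //; apply/imset2P; exists t a.
Qed.

Lemma fresh_ext_set (Xs : {set asg}) (y : V) (ys : seq V) :
  fresh_for Xs (y :: ys) -> y \notin ys -> fresh_for (ext_set Xs y) ys.
Proof.
move=> hN nyys u /imset2P[t a tX _ ->] z zys; rewrite ffunE.
have nzy : z != y by apply: contraNneq nyys => <-.
by rewrite (negbTE nzy); apply: hN => //; rewrite inE zys orbT.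
Qed.

(* Splitting kernels for [y :: ys] into a kernel for [y] followed by a kernel
   for [ys]: [kcons] composes, [khead] and [ktail] decompose (marginal and
   conditional; the conditional is uniform where the marginal vanishes). *)
Section KernelCons.
Variable y : V.

Definition kcons (n : nat) (F : asg -> A -> R) (K : asg -> n.-tuple A -> R) (s : asg)
  (c : n.+1.-tuple A) : R :=
  F s (thead c) * K (upd s y (thead c)) (behead_tuple c).

Definition khead (n : nat) (K : asg -> n.+1.-tuple A -> R) (s : asg) (a : A) : R :=
  \sum_(b : n.-tuple A) K s [tuple of a :: b].

Definition ktail (n : nat) (K : asg -> n.+1.-tuple A -> R) (u : asg) (b : n.-tuple A) : R :=
  match u y with
  | Some a => if khead K (forget y u) a == 0 then #|{: n.-tuple A}|%:R^-1
              else K (forget y u) [tuple of a :: b] / khead K (forget y u) a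
  | None => 0
  end.

Lemma kcons_dist (n : nat) (Xs : {set asg}) (F : asg -> A -> R) (K : asg -> n.-tuple A -> R) :
  (forall s, s \in Xs -> is_dist (F s)) ->
  (forall u, u \in ext_set Xs y -> is_dist (K u)) ->
  forall s, s \in Xs -> is_dist (kcons F K s).
Proof.
move=> hF hK s sX; have [F0 F1] := hF s sX.
have Kd a : is_dist (K (upd s y a)) by apply: hK; apply/imset2P; exists s a.
split=> [c|]; first by apply: mulr_ge0; [exact: F0 | have [] := Kd (thead c)].
rewrite sum_tuple_cons -F1; apply: eq_bigr => a _; rewrite /kcons.
under eq_bigr do rewrite theadE behead_cons.
by rewrite -mulr_sumr; have [_ ->] := Kd a; rewrite mulr1.
Qed.

Lemma khead_dist (n : nat) (K : asg -> n.+1.-tuple A -> R) (s : asg) :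
  is_dist (K s) -> is_dist (khead K s).
Proof.
move=> [K0 K1]; split=> [a|]; first by apply: sumr_ge0 => b _.
by rewrite -K1 sum_tuple_cons.
Qed.

Lemma ktail_upd (n : nat) (K : asg -> n.+1.-tuple A -> R) (t : asg) (a : A) (b : n.-tuple A) :
  t y = None -> ktail K (upd t y a) b =
    if khead K t a == 0 then #|{: n.-tuple A}|%:R^-1
    else K t [tuple of a :: b] / khead K t a.
Proof. by move=> ht; rewrite /ktail ffunE eqxx forget_upd. Qed.

Lemma ktail_dist (n : nat) (Xs : {set asg}) (K : asg -> n.+1.-tuple A -> R) :
  fresh_for Xs [:: y] -> (forall s, s \in Xs -> is_dist (K s)) ->
  forall u, u \in ext_set Xs y -> is_dist (ktail K u).
Proof.
move=> hN hK u /imset2P[t a tX _ ->]; have ty := hN t tX y (mem_head _ _).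
have [K0 _] := hK t tX; have [H0 _] := khead_dist (hK t tX).
have [Hz|Hnz] := eqVneq (khead K t a) 0; split=> [b|].
- by rewrite ktail_upd // Hz eqxx invr_ge0 ler0n.
- under eq_bigr do rewrite ktail_upd // Hz eqxx.
  rewrite sumr_const -[_ *+ _]mulr_natr mulVf // pnatr_eq0 -lt0n card_tuple expn_gt0.
  by apply/orP; left; apply/card_gt0P; exists a.
- by rewrite ktail_upd // (negbTE Hnz) divr_ge0.
- under eq_bigr do rewrite ktail_upd // (negbTE Hnz).
- by rewrite -mulr_suml divff.
Qed.

Lemma kcons_khead_ktail (n : nat) (K : asg -> n.+1.-tuple A -> R) (s : asg) (c : n.+1.-tuple A) :
  is_dist (K s) -> s y = None -> kcons (khead K) (ktail K) s c = K s c.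
Proof.
move=> [K0 _] sy; case/tupleP: c => a b.
rewrite /kcons theadE behead_cons ktail_upd //.
have [Hz|Hnz] := eqVneq (khead K s a) 0; last by rewrite mulrC divfK.
by rewrite Hz mul0r; apply/esym/(psumr_eq0P (fun b _ => K0 _) Hz).
Qed.

Lemma kext_kcons (Xs : {set asg}) (X : asg -> R) (ys : seq V) (F : asg -> A -> R)
  (K : asg -> (size ys).-tuple A -> R) :
  uniq (y :: ys) -> fresh_for Xs (y :: ys) ->
  forall u, u \in dext_set Xs (y :: ys) ->
  kext (ext_set Xs y) (ext_w Xs X F y) K u = @kext Xs X (y :: ys) (kcons F K) u.
Proof.
move=> uys hN _ /imset2P[t c tX _ ->]; case/tupleP: c => a b.
have /andP[nyys uys'] := uys.
have hNy : fresh_for Xs [:: y].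
  by move=> s sX z; rewrite inE => /eqP->; exact: hN (mem_head _ _).
have tya : upd t y a \in ext_set Xs y by apply/imset2P; exists t a.
rewrite (@kext_upds Xs X (y :: ys)) //.
have -> : upds t (y :: ys) [tuple of a :: b] = upds (upd t y a) ys b by rewrite upds_upd.
rewrite kext_upds //; last exact: fresh_ext_set.
by rewrite ext_w_upd // /kcons theadE behead_cons mulrA.
Qed.

End KernelCons.

(* ∃ȳ p holds in X iff p holds in X(K/ȳ) for some kernel K: the successive
   choice functions of the quantifiers compose into one kernel. *)
Lemma exs_kernel (p : pform tau V) (ys : seq V) : uniq ys ->
  forall (Xs : {set asg}) (X : asg -> R), fresh_for Xs ys ->
  psat I (exs ys p) Xs X <->
  exists K : asg -> (size ys).-tuple A -> R,
    (forall s, s \in Xs -> is_dist (K s)) /\ psat I p (dext_set Xs ys) (kext Xs X K).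
Proof.
elim: ys => [|y ys IH] uys Xs X hN /=.
  rewrite dext_set_nil.
  have kext0 K s : s \in Xs -> @kext Xs X [::] K s = X s * K s [tuple].
    exact: (@kext_upds Xs X [::] K s [tuple] uys hN).
  split=> [H|[K [hK H]]].
    exists (fun _ _ => 1); split=> [s _|].
      by split=> //; rewrite sumr_const card_tuple expn0.
    by apply: (proj1 (psat_ext _ _)) H => s sX; rewrite kext0 // mulr1.
  apply: (proj1 (psat_ext _ _)) H => s sX.
  by rewrite kext0 // (dist_tuple_size0 _ (hK s sX)) ?mulr1.
have /andP[nyys uys'] := uys.
have hN' := fresh_ext_set hN nyys.
have hNy : fresh_for Xs [:: y].
  by move=> s sX z; rewrite inE => /eqP->; exact: hN (mem_head _ _).
have transfer F (K : asg -> (size ys).-tuple A -> R) :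
    psat I p (dext_set (ext_set Xs y) ys) (kext (ext_set Xs y) (ext_w Xs X F y) K) <->
    psat I p (dext_set Xs (y :: ys)) (@kext Xs X (y :: ys) (kcons y F K)).
  by rewrite dext_set_cons //; apply: psat_ext; exact: kext_kcons.
split=> [[F [hF /(IH uys' _ _ hN') [K [hK /transfer H]]]]|[K [hK H]]].
  by exists (kcons y F K); split=> //; exact: kcons_dist.
exists (khead K); split=> [s sX|]; first exact: khead_dist (hK s sX).
apply/(IH uys' _ _ hN'); exists (ktail y K); split; first exact: ktail_dist.
apply/transfer; apply: (proj2 (psat_ext _ _)) H => u uX.
apply: kext_eq => s c sX; apply: kcons_khead_ktail; first exact: hK.
exact: hN (mem_head _ _).
Qed.

End Kernels.

Section Independence.
Variables (R : realType) (tau : vocab) (V A : finType) (I : pinterp tau A).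
Variables (xs ys : seq V) (Xs : {set asg V A}) (X : asg V A -> R).
Hypotheses (uys : uniq ys) (disj : all (fun y => y \notin xs) ys)
  (team : is_team Xs X) (dom : forall s, s \in Xs -> adom s = [set x in xs]).
Local Notation asg := (asg V A).
Local Notation kernel := (asg -> (size ys).-tuple A -> R).
Local Notation is_kernel K := (forall s, s \in Xs -> is_dist (K s)).
Local Notation pm K := (pmass (dext_set Xs ys) (kext Xs X K)).

(* The ȳ-marginal of X(K/ȳ): a mixture of the distributions K s. *)
Definition kmix (K : kernel) (b : (size ys).-tuple A) : R := \sum_(s in Xs) X s * K s b.

Lemma unassigned_off_xs (s : asg) (v : V) : s \in Xs -> v \notin xs -> s v = None.
Proof.
move=> sX vxs; have : v \notin adom s by rewrite dom // inE.
by rewrite inE negbK => /eqP.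
Qed.

Lemma fresh_team : fresh_for Xs ys.
Proof. by move=> s sX y yys; apply: unassigned_off_xs => //; exact: (allP disj). Qed.

Lemma upds_on_xs (s : asg) (b : seq A) : map (upds s ys b) xs = map s xs.
Proof.
apply/eq_in_map => x xxs; apply: upds_out.
by apply: contraL xxs => xys; exact: (allP disj).
Qed.

Lemma team_inj (s s' : asg) : s \in Xs -> s' \in Xs -> map s xs = map s' xs -> s = s'.
Proof.
move=> sX s'X /eq_in_map e; apply/ffunP => v.
case: (boolP (v \in xs)) => vxs; first exact: e.
by rewrite !unassigned_off_xs.
Qed.

Lemma eq_map_Some (b b' : (size ys).-tuple A) : (map Some b == map Some b') = (b == b').
Proof. by rewrite (inj_eq (inj_map (@Some_inj _))). Qed.

Lemma kernel_total (K : kernel) : is_kernel K ->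
  \sum_(s in Xs) \sum_(b : (size ys).-tuple A) X s * K s b = 1.
Proof.
move=> hK; have [_ _ <-] := team; apply: eq_bigr => s sX.
by rewrite -mulr_sumr; have [_ ->] := hK s sX; rewrite mulr1.
Qed.

Lemma kmix_dist (K : kernel) : is_kernel K -> is_dist (kmix K).
Proof.
move=> hK; have [X0 _ _] := team; split=> [b|].
  by apply: sumr_ge0 => s sX; apply: mulr_ge0 => //; have [] := hK s sX.
by rewrite /kmix exchange_big kernel_total.
Qed.

Lemma pmass_kext_nil (K : kernel) (g : {ffun V -> A}) : is_kernel K -> pm K [::] g = 1.
Proof. by move=> hK; rewrite /pmass sum_kext //; [exact: kernel_total | exact: fresh_team]. Qed.

Lemma pmass_kext_xs (K : kernel) (g : {ffun V -> A}) (s0 : asg) :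
  is_kernel K -> s0 \in Xs -> [seq Some (g u) | u <- xs] = map s0 xs ->
  pm K xs g = X s0.
Proof.
move=> hK s0X gxs; rewrite /pmass gxs sum_kext //; last exact: fresh_team.
rewrite (bigD1 s0) //= [Z in _ + Z]big1 ?addr0.
  under eq_bigr do rewrite upds_on_xs eqxx.
  by rewrite -mulr_sumr; have [_ ->] := hK s0 s0X; rewrite mulr1.
move=> s /andP[sX ns]; apply: big1 => b _; rewrite upds_on_xs.
by case: eqP => // e; rewrite (team_inj sX s0X e) eqxx in ns.
Qed.

Lemma pmass_kext_ys (K : kernel) (g : {ffun V -> A}) (b0 : (size ys).-tuple A) :
  [seq Some (g u) | u <- ys] = map Some b0 -> pm K ys g = kmix K b0.
Proof.
move=> gys; rewrite /pmass gys sum_kext //; last exact: fresh_team.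
apply: eq_bigr => s sX; rewrite (bigD1 b0) //= [Z in _ + Z]big1 ?addr0.
  by rewrite upds_map ?size_tuple // eqxx.
by move=> b nb; rewrite upds_map ?size_tuple // eq_map_Some (negbTE nb).
Qed.

Lemma pmass_kext_xys (K : kernel) (g : {ffun V -> A}) (s0 : asg)
  (b0 : (size ys).-tuple A) : s0 \in Xs ->
  [seq Some (g u) | u <- xs] = map s0 xs -> [seq Some (g u) | u <- ys] = map Some b0 ->
  pm K (xs ++ ys) g = X s0 * K s0 b0.
Proof.
move=> s0X gxs gys; rewrite /pmass sum_kext //; last exact: fresh_team.
have e s (b : (size ys).-tuple A) :
    ([seq upds s ys b u | u <- xs ++ ys] == [seq Some (g u) | u <- xs ++ ys]) =
    (map s xs == map s0 xs) && (b == b0).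
  rewrite !map_cat gxs gys eqseq_cat ?size_map // upds_on_xs.
  by rewrite upds_map ?size_tuple // eq_map_Some.
under eq_bigr do under eq_bigr do rewrite e.
rewrite (bigD1 s0) //= [Z in _ + Z]big1 ?addr0.
  rewrite (bigD1 b0) //= !eqxx [Z in _ + Z]big1 ?addr0 //.
  by move=> b nb; rewrite (negbTE nb) andbF.
move=> s /andP[sX ns]; apply: big1 => b _.
by case: eqP => //= es; rewrite (team_inj sX s0X es) eqxx in ns.
Qed.

Lemma extend_valuation (a0 : A) (b0 : (size ys).-tuple A) (s0 : asg) : s0 \in Xs ->
  exists g : {ffun V -> A}, [seq Some (g u) | u <- xs] = map s0 xs /\
                            [seq Some (g u) | u <- ys] = map Some b0.
Proof.
move=> s0X.
exists [ffun v => if v \in ys then nth a0 b0 (index v ys) else odflt a0 (s0 v)].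
split; last first.
  rewrite -[in RHS](map_nth_index a0 uys (size_tuple b0)) -map_comp.
  by apply/eq_in_map => v vys /=; rewrite ffunE vys.
apply/eq_in_map => v vxs /=; rewrite ffunE ifN; last first.
  by apply: contraL vxs => vys; exact: (allP disj).
have : v \in adom s0 by rewrite dom // inE.
by rewrite inE; case: (s0 v).
Qed.

Lemma indep_kernel_mix (K : kernel) : is_kernel K ->
  psat I (CInd [::] xs ys) (dext_set Xs ys) (kext Xs X K) ->
  forall s0 (b0 : (size ys).-tuple A), s0 \in Xs -> X s0 * K s0 b0 = X s0 * kmix K b0.
Proof.
move=> hK H s0 b0 s0X; have [_ _ Xsum] := team.
(* With an empty universe ȳ must be empty, and both sides equal X s0. *)
case: (pickP (@predT A)) => [a0 _ | A0]; last first.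
  have sz0 : size ys = 0%N by move: (b0); case: (size ys) => // n b; have := A0 (thead b).
  rewrite /kmix (dist_tuple_size0 sz0 (hK s0 s0X)).
  by under eq_bigr => s sX do rewrite (dist_tuple_size0 sz0 (hK s sX)) mulr1; rewrite Xsum.
have [g [gxs gys]] := extend_valuation a0 b0 s0X.
have := H g; rewrite /= (pmass_kext_xs hK s0X gxs) (pmass_kext_ys K gys).
by rewrite (pmass_kext_xys K s0X gxs gys) pmass_kext_nil // mulr1 => ->.
Qed.

Lemma indep_const (d : (size ys).-tuple A -> R) : is_dist d ->
  psat I (CInd [::] xs ys) (dext_set Xs ys) (dext_w Xs X d).
Proof.
move=> hd g; have [_ d1] := hd; have hK : is_kernel (fun _ => d) by [].
rewrite /= pmass_kext_nil // mulr1 /pmass !sum_kext //; try exact: fresh_team.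
(* Each event splits into a condition on s and a condition on b, so that the
   sums factor through [sum_cond_prod]. *)
set gX := [seq Some (g u) | u <- xs]; set gY := [seq Some (g u) | u <- ys].
have split_xs s (b : (size ys).-tuple A) :
    (map (upds s ys b) xs == gX) = (map s xs == gX) && true.
  by rewrite upds_on_xs andbT.
have split_ys s (b : (size ys).-tuple A) :
    (map (upds s ys b) ys == gY) = true && (map Some b == gY).
  by rewrite upds_map ?size_tuple.
have split_xys s (b : (size ys).-tuple A) :
    (map (upds s ys b) (xs ++ ys) == [seq Some (g u) | u <- xs ++ ys]) =
    (map s xs == gX) && (map Some b == gY).
  by rewrite !map_cat eqseq_cat ?size_map // upds_on_xs upds_map ?size_tuple.
under eq_bigr do under eq_bigr do rewrite split_xs.
under [in X in _ * X = _]eq_bigr do under eq_bigr do rewrite split_ys.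
under [in X in _ = X]eq_bigr do under eq_bigr do rewrite split_xys.
have [_ _ Xsum] := team.
by rewrite !sum_cond_prod d1 mulr1 Xsum mul1r.
Qed.

Lemma indep_kernel_iff (q : pform tau V) :
  (exists K : kernel, is_kernel K /\
     psat I (CInd [::] xs ys) (dext_set Xs ys) (kext Xs X K) /\
     psat I q (dext_set Xs ys) (kext Xs X K)) <->
  (exists d : (size ys).-tuple A -> R, is_dist d /\ psat I q (dext_set Xs ys) (dext_w Xs X d)).
Proof.
split=> [[K [hK [hC hq]]]|[d [hd hq]]].
  exists (kmix K); split; first exact: kmix_dist.
  change (psat I q (dext_set Xs ys) (kext Xs X (fun _ => kmix K))).
  apply: (proj1 (psat_ext I q _)) hq => _ /imset2P[s b sX _ ->].
  rewrite !kext_upds //; try exact: fresh_team.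
  exact: indep_kernel_mix.
by exists (fun _ => d); split=> //; split=> //; exact: indep_const.
Qed.

End Independence.

Theorem mainTheorem5 (R : realType) (tau : vocab) (V A : finType) (I : pinterp tau A)
  (xs ys : seq V) (psi : pform tau V) (Xs : {set asg V A}) (X : asg V A -> R) :
  uniq xs -> uniq ys -> all (fun y => y \notin xs) ys ->
  {subset fv psi <= xs ++ ys} ->
  team_over [set x in xs] Xs X ->
  (psat I (phi_ex xs ys psi) Xs X <->
     exists d : (size ys).-tuple A -> R,
       is_dist d /\ psat I psi (dext_set Xs ys) (dext_w Xs X d)) /\
  (psat I (phi_all xs ys psi) Xs X <->
     forall d : (size ys).-tuple A -> R,
       is_dist d -> psat I psi (dext_set Xs ys) (dext_w Xs X d)).
Proof.
move=> _ uys disj _ [team dom].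
have hN := fresh_team disj dom.
have kernel_iff := indep_kernel_iff I uys disj team dom.
split; first by rewrite /phi_ex (exs_kernel I _ uys _ hN); exact: kernel_iff.
(* φ∀ = ~∃ȳ ~~(x̄ ⫫ ȳ ∧ ~ψ): a kernel refutes ψ under independence
   iff some distribution d refutes ψ in X(d/ȳ). *)
rewrite /phi_all /forallS /implS /= (exs_kernel I _ uys _ hN) /=.
have [to_dist from_dist] := kernel_iff (Neg psi).
split=> [H d hd|H [K [hK hnn]]].
  apply: NNPP => npsi; apply: H.
  have [K [hK [hC hn]]] := from_dist (ex_intro _ d (conj hd npsi)).
  by exists K; split=> // -[].
apply: hnn => -[hC hn]; have [d [hd /= nd]] := to_dist (ex_intro _ K (conj hK (conj hC hn))).
exact: nd (H d hd).
Qed.
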